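(* Let $L_5=\{-3,-2,-1,0,1\}$ with its natural linear order. Define the games $\star=\{-1\mid -3\}$, and for any game $G$: $\mathsf{M}(G)=\{1\mid G\}$, $\mathsf{P}(G)=\{G\mid -2\}$, $\mathsf{P}_\star(G)=\{G\mid \star\}$. For $n\in\mathbb{N}$ let $\mathsf{P}_n(G)=\mathsf{P}(G)$ if $n$ is odd and $\mathsf{P}_n(G)=\mathsf{P}_\star(G)$ if $n$ is even. Define $G_0=0$ (the atomic game $[0]$) and $G_{n+1}=\mathsf{M}(\mathsf{P}_n(G_n))$. Then for every $n\ge 0$, $G_n\le G_{n+1}$.
   Context: Games over a poset $A$ of atoms are defined inductively: for each $a\in A$, $[a]$ is a game (atomic; often written simply $a$); whenever $L,R$ are non-empty sets of games, $\{L\mid R\}$ is a game (composite), with left options the elements of $L$ and right options the elements of $R$; $\{G_1,\dots,G_n\mid H_1,\dots,H_m\}$ denotes $\{\{G_1,\dots,G_n\}\mid\{H_1,\dots,H_m\}\}$. Relations $\le$ and $\lhd$ on games are defined by mutual recursion: $G\le H$ iff (1) every left option $G^L$ of $G$ satisfies $G^L\lhd H$, (2) every right option $H^R$ of $H$ satisfies $G\lhd H^R$, and (3) if $G$ or $H$ is atomic then $G\lhd H$. $G\lhd H$ iff (1) some right option $G^R$ of $G$ satisfies $G^R\le H$, or (2) some left option $H^L$ of $H$ satisfies $G\le H^L$, or (3) $G=[a]$, $H=[b]$ are atomic with $a\le b$ in $A$. *)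

From Stdlib Require Import List Arith.
Import ListNotations.

Section Games.
Variable A : Type.
Variable leA : A -> A -> Prop.

(* A game: atomic [a], or composite {L | R}. Option sets are represented by
   lists; all games used below have non-empty option lists. *)
Inductive game : Type :=
| Atom : A -> game
| Comp : list game -> list game -> game.

Definition leftopts (G : game) : list game :=
  match G with Atom _ => [] | Comp l _ => l end.
Definition rightopts (G : game) : list game :=
  match G with Atom _ => [] | Comp _ r => r end.
Definition atomic (G : game) : Prop :=
  match G with Atom _ => True | Comp _ _ => False end.

(* The mutually recursive relations <= and <| (well-founded recursion
   rendered as a mutual inductive definition). *)
Inductive game_le : game -> game -> Prop :=
| game_le_intro : forall G H,
    (forall GL, In GL (leftopts G) -> game_lf GL H) ->
    (forall HR, In HR (rightopts H) -> game_lf G HR) ->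
    ((atomic G \/ atomic H) -> game_lf G H) ->
    game_le G H
with game_lf : game -> game -> Prop :=
| game_lf_R : forall G H GR, In GR (rightopts G) -> game_le GR H -> game_lf G H
| game_lf_L : forall G H HL, In HL (leftopts H) -> game_le G HL -> game_lf G H
| game_lf_atom : forall a b, leA a b -> game_lf (Atom a) (Atom b).
End Games.

Arguments Atom {A}.
Arguments Comp {A}.

Inductive L5 : Type := m3 | m2 | m1 | z0 | p1.
Definition L5_val (x : L5) : nat :=
  match x with m3 => 0 | m2 => 1 | m1 => 2 | z0 => 3 | p1 => 4 end.
Definition L5_le (x y : L5) : Prop := L5_val x <= L5_val y.

Definition G5 := game L5.
Definition le5 : G5 -> G5 -> Prop := game_le L5 L5_le.

Definition star : G5 := Comp [Atom m1] [Atom m3].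
Definition Mg (G : G5) : G5 := Comp [Atom p1] [G].
Definition Pg (G : G5) : G5 := Comp [G] [Atom m2].
Definition Pstar (G : G5) : G5 := Comp [G] [star].
Definition Pn (n : nat) (G : G5) : G5 := if Nat.odd n then Pg G else Pstar G.

Fixpoint Gseq (n : nat) : G5 :=
  match n with
  | 0 => Atom z0
  | S k => Mg (Pn k (Gseq k))
  end.

(* G_n <= G_(n+1) needs nothing about the particular games involved: both
   sides have the form {1 | P_k(X)}, and the comparison is settled one level
   down by reflexivity.  The left option 1 of G_n is matched by the left option
   1 of G_(n+1) (for G_0 = 0, the atom 0 lies below the top atom 1), and the
   single right option P_n(G_n) of G_(n+1) has G_n itself as a left option. *)
From Stdlib Require Import List Arith Lia.
Import ListNotations.

Section GameOrder.
Variables (A : Type) (leA : A -> A -> Prop).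

Fixpoint game_ind_Forall (P : game A -> Prop) (HAtom : forall a, P (Atom a))
    (HComp : forall l r, Forall P l -> Forall P r -> P (Comp l r)) (g : game A) :
    P g :=
  let fix all_P (gs : list (game A)) : Forall P gs :=
    match gs with
    | [] => Forall_nil P
    | g' :: gs' => Forall_cons g' (game_ind_Forall P HAtom HComp g') (all_P gs')
    end in
  match g with
  | Atom a => HAtom a
  | Comp l r => HComp l r (all_P l) (all_P r)
  end.

Lemma game_le_Atom (a b : A) : leA a b -> game_le A leA (Atom a) (Atom b).
Proof.
  intro Hab; constructor; simpl; try tauto.
  intros _; now apply game_lf_atom.
Qed.

Hypothesis leA_refl : forall a, leA a a.

Lemma game_le_refl (g : game A) : game_le A leA g g.
Proof.
  induction g as [a | l r Hl Hr] using game_ind_Forall.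
  - now apply game_le_Atom.
  - rewrite Forall_forall in Hl, Hr.
    constructor; simpl.
    + intros GL HGL; apply game_lf_L with GL; auto.
    + intros HR HHR; apply game_lf_R with HR; auto.
    + tauto.
Qed.

Lemma game_lf_leftopt (G H : game A) : In G (leftopts A H) -> game_lf A leA G H.
Proof. intro HG; apply game_lf_L with G; [exact HG | apply game_le_refl]. Qed.

Lemma game_le_Comp_of_options (G : game A) (l r : list (game A)) :
  incl (leftopts A G) l ->
  (forall HR, In HR r -> In G (leftopts A HR)) ->
  (atomic A G -> exists2 HL, In HL l & game_le A leA G HL) ->
  game_le A leA G (Comp l r).
Proof.
  intros Hleft Hright Hatom; constructor; simpl.
  - intros GL HGL; apply game_lf_leftopt, Hleft, HGL.
  - intros HR HHR; apply game_lf_leftopt, Hright, HHR.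
  - intros [HG | []]; destruct (Hatom HG) as [HL HHL HGHL].
    now apply game_lf_L with HL.
Qed.

End GameOrder.

Lemma L5_le_refl (x : L5) : L5_le x x.
Proof. unfold L5_le; lia. Qed.

Lemma L5_le_p1 (x : L5) : L5_le x p1.
Proof. destruct x; unfold L5_le; simpl; lia. Qed.

Lemma In_leftopts_Pn (n : nat) (G : G5) : In G (leftopts L5 (Pn n G)).
Proof. unfold Pn; destruct (Nat.odd n); now left. Qed.

Lemma le5_Mg_Pn (n : nat) (G : G5) :
  incl (leftopts L5 G) [Atom p1] -> le5 G (Mg (Pn n G)).
Proof.
  intro Hleft; apply (game_le_Comp_of_options _ _ L5_le_refl); [exact Hleft | |].
  - intros HR [<- | []]; apply In_leftopts_Pn.
  - destruct G as [a |]; intros []; exists (Atom p1); [now left |].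
    apply game_le_Atom, L5_le_p1.
Qed.

Lemma leftopts_Gseq (n : nat) : incl (leftopts L5 (Gseq n)) [Atom p1].
Proof. destruct n; simpl; [apply incl_nil_l | apply incl_refl]. Qed.

Theorem lemma3p2 : forall n : nat, le5 (Gseq n) (Gseq (S n)).
Proof.
  intro n; apply le5_Mg_Pn, leftopts_Gseq.
Qed.
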